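(* Let $V$ be a finite set whose elements carry positive weights, and for $A \subseteq V$ let $\vert A \vert$ denote the total weight of $A$. Let $\mathcal{P}$ and $\mathcal{P}'$ be partitions of $V$ into nonempty parts, and define $\phi_{\mathcal{P}'} : 2^{\mathcal{P}} \to \mathbb{R}$ by $$\phi_{\mathcal{P}'}(\mathcal{S}) = \sum_{P' \in \mathcal{P}'} \vert P' \vert \operatorname{peak}\Big(\frac{\vert U_{\mathcal{S}} \cap P' \vert}{\vert P' \vert}\Big),$$ where $U_{\mathcal{S}}$ is the union of the sets in $\mathcal{S}$ and $\operatorname{peak}(x) = x$ for $x \le 1/2$, $\operatorname{peak}(x) = 1-x$ for $x > 1/2$. Then $\phi_{\mathcal{P}'}$ is symmetric and submodular.
   Context: A function $\Pi : 2^{\mathcal{P}} \to \mathbb{R}$ is symmetric if $\Pi(\mathcal{S}) = \Pi(\mathcal{P} \setminus \mathcal{S})$ for all $\mathcal{S} \subseteq \mathcal{P}$, and submodular if $\Pi(\mathcal{S}_1 \cup \mathcal{S}_2) \le \Pi(\mathcal{S}_1) + \Pi(\mathcal{S}_2) - \Pi(\mathcal{S}_1 \cap \mathcal{S}_2)$ for all $\mathcal{S}_1, \mathcal{S}_2 \subseteq \mathcal{P}$. *)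

From mathcomp Require Import all_boot all_order all_algebra.
Set Implicit Arguments. Unset Strict Implicit. Unset Printing Implicit Defensive.
Import Order.TTheory GRing.Theory Num.Theory.
Local Open Scope ring_scope.

Definition wt {R : realFieldType} {V : finType} (w : V -> R) (A : {set V}) : R :=
  \sum_(v in A) w v.

Definition peak {R : realFieldType} (x : R) : R :=
  if x <= 2^-1 then x else 1 - x.

Definition Uof {V : finType} (S : {set {set V}}) : {set V} := \bigcup_(X in S) X.

Definition nonempty_partition {V : finType} (P : {set {set V}}) : bool :=
  partition P [set: V] && (set0 \notin P).

Definition phi {R : realFieldType} {V : finType} (w : V -> R)
  (P' : {set {set V}}) (S : {set {set V}}) : R :=
  \sum_(Q in P') wt w Q * peak (wt w (Uof S :&: Q) / wt w Q).

Definition symmetric_on {V : finType} {R : realFieldType}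
  (P : {set {set V}}) (f : {set {set V}} -> R) : Prop :=
  forall S : {set {set V}}, S \subset P -> f S = f (P :\: S).

Definition submodular_on {V : finType} {R : realFieldType}
  (P : {set {set V}}) (f : {set {set V}} -> R) : Prop :=
  forall S1 S2 : {set {set V}}, S1 \subset P -> S2 \subset P ->
    f (S1 :|: S2) <= f S1 + f S2 - f (S1 :&: S2).

From mathcomp Require Import all_boot all_order all_algebra.
From mathcomp Require Import lra.

Set Implicit Arguments.
Unset Strict Implicit.
Unset Printing Implicit Defensive.
Import Order.TTheory GRing.Theory Num.Theory.
Local Open Scope ring_scope.

(* Scaling by |P'| turns each term of phi into the tent function
   t_q(x) = min(x, q - x) evaluated at x = |U_S ∩ P'| with q = |P'|.
   Since P is a partition, S ↦ U_S maps complements, unions and intersections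
   of subfamilies of P to those of subsets of V.  Symmetry then follows from
   t_q(q - x) = t_q(x), and submodularity from the concavity of t_q together
   with the modularity |A ∪ B| + |A ∩ B| = |A| + |B| of the weight. *)

Section Tent.
Variable R : realFieldType.

Definition tent (q x : R) : R := if 2 * x <= q then x else q - x.

Lemma mul_peak_div (q x : R) : 0 < q -> q * peak (x / q) = tent q x.
Proof.
move=> q_gt0; rewrite /peak /tent.
have -> : (x / q <= 2^-1) = (2 * x <= q).
  by rewrite ler_pdivrMr // mulrC -ler_pdivlMl // ?invrK // mulrC.
have qK : q * (x / q) = x by rewrite mulrCA divff ?gt_eqF // mulr1.
by case: ifP => _; rewrite ?mulrBr ?mulr1 qK.
Qed.

Lemma tent_sym (q x : R) : tent q (q - x) = tent q x.
Proof. by rewrite /tent; do 2 case: lerP => ?; lra. Qed.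

Lemma tent_exchange (q a b c d : R) :
  d <= a -> d <= b -> c + d = a + b -> tent q c + tent q d <= tent q a + tent q b.
Proof.
move=> da db cd; rewrite /tent.
by case: (lerP (2 * c) q) => ?; case: (lerP (2 * d) q) => ?;
   case: (lerP (2 * a) q) => ?; case: (lerP (2 * b) q) => ?; lra.
Qed.

End Tent.

Section Weight.
Variables (R : realFieldType) (V : finType) (w : V -> R).
Hypothesis w_gt0 : forall v, 0 < w v.

Lemma wt_setID (A B : {set V}) : wt w A = wt w (A :&: B) + wt w (A :\: B).
Proof. exact: big_setID. Qed.

Lemma wt_setUI (A B : {set V}) :
  wt w (A :|: B) + wt w (A :&: B) = wt w A + wt w B.
Proof.
rewrite (wt_setID (A :|: B) A) (wt_setID B A) setUK.
have -> : (A :|: B) :\: A = B :\: A by rewrite setDUl setDv set0U.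
by rewrite setIC addrAC addrA.
Qed.

Lemma wt_ge0 (A : {set V}) : 0 <= wt w A.
Proof. by apply: sumr_ge0 => v _; apply: ltW. Qed.

Lemma wt_gt0 (A : {set V}) : A != set0 -> 0 < wt w A.
Proof.
case/set0Pn => x xA; rewrite /wt (bigD1 x) //=.
by rewrite ltr_pwDl // sumr_ge0 // => v _; apply: ltW.
Qed.

Lemma wt_subset (A B : {set V}) : A \subset B -> wt w A <= wt w B.
Proof.
by move=> /setIidPr AB; rewrite (wt_setID B A) AB lerDl wt_ge0.
Qed.

Lemma tent_wt_submod (q : R) (A B : {set V}) :
  tent q (wt w (A :|: B)) + tent q (wt w (A :&: B)) <=
  tent q (wt w A) + tent q (wt w B).
Proof.
by apply: tent_exchange; rewrite ?wt_setUI // wt_subset // ?subsetIl ?subsetIr.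
Qed.

End Weight.

Lemma Uof_setU (V : finType) (S1 S2 : {set {set V}}) :
  Uof (S1 :|: S2) = Uof S1 :|: Uof S2.
Proof. exact: bigcup_setU. Qed.

Section BlockUnions.
Variables (V : finType) (P : {set {set V}}).
Hypothesis trivP : trivIset P.

Lemma block_eq (X Y : {set V}) (x : V) :
  X \in P -> Y \in P -> x \in X -> x \in Y -> X = Y.
Proof. by move=> XP YP xX xY; rewrite -(def_pblock trivP XP xX) (def_pblock trivP YP xY). Qed.

Lemma Uof_setI (S1 S2 : {set {set V}}) : S1 \subset P -> S2 \subset P ->
  Uof (S1 :&: S2) = Uof S1 :&: Uof S2.
Proof.
move=> /subsetP S1P /subsetP S2P; apply/setP => x; rewrite inE.
apply/bigcupP/andP => [[X /setIP [XS1 XS2] xX] | [/bigcupP [X XS1 xX] /bigcupP [Y YS2 xY]]].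
  by split; apply/bigcupP; exists X.
exists X => //; rewrite inE XS1.
by rewrite (block_eq (S1P _ XS1) (S2P _ YS2) xX xY).
Qed.

Lemma Uof_setD (S1 S2 : {set {set V}}) : S1 \subset P -> S2 \subset P ->
  Uof (S1 :\: S2) = Uof S1 :\: Uof S2.
Proof.
move=> /subsetP S1P /subsetP S2P; apply/setP => x; rewrite inE.
apply/bigcupP/andP => [[X /setDP [XS1 XS2] xX] | [xU2 /bigcupP [X XS1 xX]]].
  split; last by apply/bigcupP; exists X.
  apply/bigcupP => -[Y YS2 xY].
  by move: XS2; rewrite (block_eq (S1P _ XS1) (S2P _ YS2) xX xY) YS2.
exists X => //; rewrite inE XS1 andbT; apply: contra xU2 => XS2.
by apply/bigcupP; exists X.
Qed.

End BlockUnions.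

Section Phi.
Variables (R : realFieldType) (V : finType) (w : V -> R).
Hypothesis w_gt0 : forall v, 0 < w v.
Variables (P P' : {set {set V}}).
Hypotheses (coverP : cover P = [set: V]) (trivP : trivIset P).
Hypothesis P'_nonempty : set0 \notin P'.

Lemma phi_tentE (S : {set {set V}}) :
  phi w P' S = \sum_(Q in P') tent (wt w Q) (wt w (Uof S :&: Q)).
Proof.
apply: eq_bigr => Q QP'; rewrite mul_peak_div // wt_gt0 //.
by apply: contraNneq P'_nonempty => <-.
Qed.

Lemma phi_symmetric : symmetric_on P (phi w P').
Proof.
move=> S SP; rewrite !phi_tentE; apply: eq_bigr => Q _.
rewrite (Uof_setD trivP) // [Uof P]coverP setTD -tent_sym; congr tent.
by rewrite (wt_setID w Q (Uof S)) setDE !(setIC Q) addrC addKr.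
Qed.

Lemma phi_submodular : submodular_on P (phi w P').
Proof.
move=> S1 S2 S1P S2P; rewrite lerBrDr !phi_tentE -!big_split ler_sum // => Q _.
by rewrite Uof_setU (Uof_setI trivP) // setIUl setIIl tent_wt_submod.
Qed.

End Phi.

Theorem proposition2 (R : realFieldType) (V : finType) (w : V -> R)
  (w_pos : forall v, 0 < w v) (P P' : {set {set V}}) :
  nonempty_partition P -> nonempty_partition P' ->
  symmetric_on P (phi w P') /\ submodular_on P (phi w P').
Proof.
move=> /andP [/and3P [/eqP coverP trivP _] _] /andP [_ P'_nonempty].
by split; [apply: phi_symmetric | apply: phi_submodular].
Qed.
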